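(* A quasi-orthomodular nearsemilattice $(A,\vee,\perp,0)$ is distributive if and only if it has the Riesz decomposition property.
   Context: A nearsemilattice is a poset $A$ with least element $0$ in which any two elements having a common upper bound have a join $x \vee y$ (a partial operation). It is distributive if whenever $y \vee z$ exists and $x \le y \vee z$, then $x = y' \vee z'$ for some $y' \le y$ and $z' \le z$. An orthogonality on $A$ is a binary relation $\perp$ with: $x \perp y$ implies $y \perp x$; $x \le y$ and $y \perp z$ imply $x \perp z$; $x \perp 0$ for all $x$. A quasi-orthomodular nearsemilattice is a nearsemilattice with an orthogonality such that: (a) if $x \perp y$ then $x \vee y$ exists; (b) if $x \le y$ then $y = x \vee z$ for some $z$ with $x \perp z$; (c) if $x \perp y$, $x \perp z$ and $y \le x \vee z$, then $y \le z$. Define the partial operation $x \oplus y := x \vee y$, defined exactly when $x \perp y$. The Riesz decomposition property: if $y \perp z$ and $x \le y \oplus z$, then $x = y' \oplus z'$ for some $y' \le y$ and $z' \le z$. *)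

Set Implicit Arguments.

Section Defs.
Variable A : Type.
Variable le : A -> A -> Prop.
Variable zero : A.
Variable orth : A -> A -> Prop.

Definition is_join (x y j : A) : Prop :=
  le x j /\ le y j /\ (forall u, le x u -> le y u -> le j u).

Definition nearsemilattice : Prop :=
  (forall x, le x x) /\
  (forall x y, le x y -> le y x -> x = y) /\
  (forall x y z, le x y -> le y z -> le x z) /\
  (forall x, le zero x) /\
  (forall x y u, le x u -> le y u -> exists j, is_join x y j).

Definition distributive : Prop :=
  forall x y z j, is_join y z j -> le x j ->
    exists y' z', le y' y /\ le z' z /\ is_join y' z' x.

Definition orthogonality : Prop :=
  (forall x y, orth x y -> orth y x) /\
  (forall x y z, le x y -> orth y z -> orth x z) /\
  (forall x, orth x zero).

Definition quasi_orthomodular_nearsemilattice : Prop :=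
  nearsemilattice /\ orthogonality /\
  (* (a) *) (forall x y, orth x y -> exists j, is_join x y j) /\
  (* (b) *) (forall x y, le x y -> exists z, orth x z /\ is_join x z y) /\
  (* (c) *) (forall x y z j, orth x y -> orth x z -> is_join x z j ->
              le y j -> le y z).

(* partial operation x (+) y := x \/ y, defined exactly when x _|_ y *)
Definition is_osum (x y s : A) : Prop := orth x y /\ is_join x y s.

Definition riesz_decomposition : Prop :=
  forall x y z s, is_osum y z s -> le x s ->
    exists y' z', le y' y /\ le z' z /\ is_osum y' z' x.
End Defs.


Set Implicit Arguments.

(* Distributivity gives Riesz decomposition at once, since orthogonality is
   inherited by smaller elements.  Conversely, let j be the join of y and z
   and x <= j.  Axiom (b) writes j = y (+) w; Riesz decomposition of z <= j
   gives z = y1 (+) w1 with y1 <= y and w1 <= w, and then j = y (+) w1.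
   A second Riesz decomposition of x <= y (+) w1 gives x = y' (+) z' with
   z' <= w1 <= z. *)

Section QuasiOrthomodular.
Variable A : Type.
Variable le : A -> A -> Prop.
Variable orth : A -> A -> Prop.

Hypothesis le_trans : forall x y z, le x y -> le y z -> le x z.
Hypothesis orth_sym : forall x y, orth x y -> orth y x.
Hypothesis orth_le : forall x y z, le x y -> orth y z -> orth x z.

Lemma orth_antitone y y' z z' :
  le y' y -> le z' z -> orth y z -> orth y' z'.
Proof.
intros Hy Hz Hyz.
apply orth_sym, (orth_le Hz), orth_sym, (orth_le Hy), Hyz.
Qed.

Lemma distributive_riesz : distributive le -> riesz_decomposition le orth.
Proof.
intros D x y z s [Hyz Hs] Hxs.
destruct (D x y z s Hs Hxs) as [y' [z' [Hy' [Hz' Hx]]]].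
exists y', z'.
exact (conj Hy' (conj Hz' (conj (orth_antitone Hy' Hz' Hyz) Hx))).
Qed.

Lemma is_join_absorb_r y z j y1 w1 :
  is_join le y z j -> is_join le y1 w1 z -> le y1 y -> is_join le y w1 j.
Proof.
intros [Hyj [Hzj Hj]] [Hy1z [Hw1z Hz]] Hy1y.
repeat split; auto.
- now apply (le_trans Hw1z).
- intros u Hyu Hw1u. apply Hj; auto.
  apply Hz; auto. now apply (le_trans Hy1y).
Qed.

Hypothesis orth_complement_in :
  forall x y, le x y -> exists z, orth x z /\ is_join le x z y.

Lemma riesz_distributive : riesz_decomposition le orth -> distributive le.
Proof.
intros R x y z j Hj Hxj.
destruct (orth_complement_in (proj1 Hj)) as [w [Hyw Hywj]].
destruct (R z y w j (conj Hyw Hywj) (proj1 (proj2 Hj)))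
  as [y1 [w1 [Hy1y [Hw1w [_ Hz]]]]].
assert (Hyw1j : is_osum le orth y w1 j).
{ split.
  - apply orth_sym, (orth_le Hw1w), orth_sym, Hyw.
  - exact (is_join_absorb_r Hj Hz Hy1y). }
destruct (R x y w1 j Hyw1j Hxj) as [y' [z' [Hy' [Hz' [_ Hx]]]]].
exists y', z'.
exact (conj Hy' (conj (le_trans Hz' (proj1 (proj2 Hz))) Hx)).
Qed.

End QuasiOrthomodular.

Theorem theorem4 (A : Type) (le : A -> A -> Prop) (zero : A)
  (orth : A -> A -> Prop) :
  quasi_orthomodular_nearsemilattice le zero orth ->
  (distributive le <-> riesz_decomposition le orth).
Proof.
intros [[_ [_ [Htrans _]]] [[Hsym [Hdown _]] [_ [Hb _]]]].
split.
- apply distributive_riesz; assumption.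
- apply riesz_distributive; assumption.
Qed.
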